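(* Let $r\ge1$ and $D\ge3$ be integers, let $N:=\lfloor \frac{(D-1)r}{2}\rfloor$, $k:=\lfloor\frac{D-1}{2}\rfloor$, $\bar k:=\lceil\frac{D-1}{2}\rceil$. Let $\alpha_1<\cdots<\alpha_{r(D-1)}$ be integers with $\alpha_1\ge2$ such that $\alpha_t$ is odd for $1\le t\le N$ and $\alpha_t$ is even for $N+1\le t\le r(D-1)$. Then there is a nonzero constant $C$ such that $\tilde\Delta_{r,D}(\underline{\alpha})=C\,\tilde\Delta'_{r,D}(\underline{\alpha})\,\tilde\Delta''_{r,D}(\underline{\alpha})$. In particular, if $\tilde\Delta'_{r,D}(\underline{\alpha})\ne0$ and $\tilde\Delta''_{r,D}(\underline{\alpha})\ne0$, then $\tilde\Delta_{r,D}(\underline{\alpha})\ne0$.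
   Context: $B_n(x)$ is the Bernoulli polynomial, $\frac{ze^{xz}}{e^z-1}=\sum_{n\ge0}B_n(x)\frac{z^n}{n!}$, $B_n=B_n(0)$, and $\tilde B_n(x):=D^n(B_n(x)-B_n)$. $\tilde\Delta_{r,D}(\underline{\alpha})$ is the determinant of the $r(D-1)\times r(D-1)$ matrix whose entry in row $t$ ($1\le t\le r(D-1)$) and column $m(D-1)+v$ ($0\le m\le r-1$, $1\le v\le D-1$) is $\frac{\tilde B_{\alpha_t+m}(v/D)}{\alpha_t+m}$. $\tilde\Delta'_{r,D}(\underline{\alpha})$ is the determinant of the $N\times N$ matrix with rows indexed by $t=1,\ldots,N$ and columns indexed by the pairs $(m,v)$ with $0\le m\le r-1$ and $1\le v\le k$ if $m$ is even, $1\le v\le\bar k$ if $m$ is odd (ordered by $m$, then by $v$), with entry $\frac{\tilde B_{\alpha_t+m}(v/D)}{\alpha_t+m}$. $\tilde\Delta''_{r,D}(\underline{\alpha})$ is the determinant of the square matrix with rows indexed by $t=N+1,\ldots,r(D-1)$ and columns indexed by the pairs $(m,v)$ with $0\le m\le r-1$ and $1\le v\le\bar k$ if $m$ is even, $1\le v\le k$ if $m$ is odd (ordered by $m$, then by $v$), with entry $\frac{\tilde B_{\alpha_t+m}(v/D)}{\alpha_t+m}$. *)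

From mathcomp Require Import all_boot all_order all_algebra.
Set Implicit Arguments.
Unset Strict Implicit.
Unset Printing Implicit Defensive.
Import Order.TTheory GRing.Theory Num.Theory.
Local Open Scope ring_scope.

(* [bern_seq n] = [:: B_0; ...; B_n], Bernoulli numbers, via the recursion
   sum_(k <= m) C(m+1,k) B_k = 0 (m >= 1), B_0 = 1, which is the coefficient
   identity of  z = (e^z - 1) * sum_n B_n z^n / n!.  (B_1 = -1/2.) *)
Fixpoint bern_seq (n : nat) : seq rat :=
  match n with
  | 0 => [:: 1]
  | n'.+1 =>
      let s := bern_seq n' in
      rcons s (- (n'.+2%:R)^-1 * \sum_(k < n'.+1) ('C(n'.+2, k))%:R * s`_k)
  end.

Definition bernoulli (n : nat) : rat := (bern_seq n)`_n.

(* B_n(x) = sum_k C(n,k) B_k x^(n-k): coefficient of z^n/n! in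
   (z/(e^z-1)) * e^(xz). *)
Definition bernpoly (n : nat) (x : rat) : rat :=
  \sum_(k < n.+1) ('C(n, k))%:R * bernoulli k * x ^+ (n - k).

Definition Btilde (D n : nat) (x : rat) : rat :=
  (D%:R) ^+ n * (bernpoly n x - bernoulli n).

Definition bentry (D a : nat) (c : nat * nat) : rat :=
  Btilde D (a + c.1) (c.2%:R / D%:R) / (a + c.1)%:R.

Definition bdet (D n : nat) (rows : nat -> nat) (cols : seq (nat * nat)) : rat :=
  \det (\matrix_(i < n, j < n) bentry D (rows i) (nth (0%N, 0%N) cols j)).

Definition Nr (r D : nat) : nat := ((D - 1) * r) %/ 2.
Definition kfl (D : nat) : nat := (D - 1) %/ 2.
Definition kcl (D : nat) : nat := ((D - 1) + 1) %/ 2.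

Definition cols_all (r D : nat) : seq (nat * nat) :=
  flatten [seq [seq (m, v) | v <- iota 1 (D - 1)] | m <- iota 0 r].
Definition cols1 (r D : nat) : seq (nat * nat) :=
  flatten [seq [seq (m, v) | v <- iota 1 (if odd m then kcl D else kfl D)]
          | m <- iota 0 r].
Definition cols2 (r D : nat) : seq (nat * nat) :=
  flatten [seq [seq (m, v) | v <- iota 1 (if odd m then kfl D else kcl D)]
          | m <- iota 0 r].

(* alpha is 1-indexed: alpha_t = alpha t for 1 <= t <= r(D-1). *)
Definition Delta (r D : nat) (alpha : nat -> nat) : rat :=
  bdet D (r * (D - 1)) (fun i => alpha i.+1) (cols_all r D).
Definition Delta' (r D : nat) (alpha : nat -> nat) : rat :=
  bdet D (Nr r D) (fun i => alpha i.+1) (cols1 r D).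
Definition Delta'' (r D : nat) (alpha : nat -> nat) : rat :=
  bdet D (r * (D - 1) - Nr r D) (fun i => alpha (Nr r D + i).+1) (cols2 r D).

Definition admissible (r D : nat) (alpha : nat -> nat) : Prop :=
  [/\ (forall t, (1 <= t)%N -> (t < r * (D - 1))%N -> (alpha t < alpha t.+1)%N),
      (2 <= alpha 1)%N,
      (forall t, (1 <= t)%N -> (t <= Nr r D)%N -> odd (alpha t))
    & (forall t, (Nr r D < t)%N -> (t <= r * (D - 1))%N -> ~~ odd (alpha t))].

(* The reflection formula B_n(1 - x) = (-1)^n B_n(x), obtained from the
   uniqueness of Appell sequences with P_n(1) = P_n(0) for n >= 2, gives the
   column symmetry  bentry a (m, D - v) = (-1)^(a + m) bentry a (m, v)  for
   a + m >= 2; in particular the middle column v = D/2 vanishes when a + m is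
   odd.  Hence, on the rows of a fixed parity p, every column of the big matrix
   is 0 or +-1 times one of the columns (m, w), w <= D/2, that survive for p,
   and these are exactly the columns of Delta' (p odd) or Delta'' (p even).
   So the big matrix is diag(A', A'') * S with S a 0/+-1 matrix independent of
   alpha, and C = det S.  S is invertible: for w < D/2 the columns (m, w),
   (m, D - w) meet the two copies of the reduced column (m, w) in a block
   [[1, s], [1, -s]], while a middle column survives for one parity only. *)

From mathcomp Require Import all_boot all_order all_algebra.
From mathcomp Require Import zify ring lra.
Set Implicit Arguments. Unset Strict Implicit. Unset Printing Implicit Defensive.
Import Order.TTheory GRing.Theory Num.Theory.
Local Open Scope ring_scope.

Lemma size_bern_seq n : size (bern_seq n) = n.+1.
Proof. by elim: n => //= n IH; rewrite size_rcons IH. Qed.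

Lemma nth_bern_seq n k : (k <= n)%N -> (bern_seq n)`_k = bernoulli k.
Proof.
elim: n k => [|n IH] k; first by rewrite leqn0 => /eqP ->.
rewrite leq_eqVlt => /orP [/eqP -> //| lt_kn].
by rewrite /= nth_rcons size_bern_seq lt_kn IH.
Qed.

Lemma bernoulli_rec m : (0 < m)%N ->
  \sum_(k < m.+1) ('C(m.+1, k))%:R * bernoulli k = 0.
Proof.
case: m => // n _; rewrite big_ord_recr /= binSn.
have -> : bernoulli n.+1 =
    - (n.+2%:R)^-1 * \sum_(k < n.+1) ('C(n.+2, k))%:R * bernoulli k.
  rewrite /bernoulli /= nth_rcons size_bern_seq ltnn eqxx.
  by congr (_ * _); apply: eq_bigr => k _; rewrite nth_bern_seq // -ltnS.
by rewrite mulrA mulrN mulfV ?pnatr_eq0 // mulN1r subrr.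
Qed.

Definition bernoulli_poly (n : nat) : {poly rat} :=
  \sum_(k < n.+1) (('C(n, k))%:R * bernoulli k) *: 'X^(n - k).

Lemma horner_bernoulli_poly n x : (bernoulli_poly n).[x] = bernpoly n x.
Proof.
rewrite horner_sum; apply: eq_bigr => k _.
by rewrite hornerZ hornerXn.
Qed.

Lemma bernoulli_poly_at0 n : (bernoulli_poly n).[0] = bernoulli n.
Proof.
rewrite horner_bernoulli_poly /bernpoly big_ord_recr /= subnn binn mul1r mulr1.
rewrite big1 ?add0r // => k _.
by rewrite expr0n subn_eq0 leqNgt ltn_ord mulr0.
Qed.

Lemma bernoulli_poly_at1 n : (1 < n)%N ->
  (bernoulli_poly n).[1] = (bernoulli_poly n).[0].
Proof.
case: n => // n lt0n; rewrite bernoulli_poly_at0 horner_bernoulli_poly.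
rewrite /bernpoly big_ord_recr /= binn mul1r expr1n mulr1.
have -> : \sum_(k < n.+1) 'C(n.+1, k)%:R * bernoulli k * 1 ^+ (n.+1 - k) = 0.
  rewrite -[RHS](bernoulli_rec lt0n).
  by apply: eq_bigr => k _; rewrite expr1n mulr1.
by rewrite add0r.
Qed.

Lemma deriv_bernoulli_poly n :
  (bernoulli_poly n.+1)^`() = n.+1%:R *: bernoulli_poly n.
Proof.
rewrite /bernoulli_poly raddf_sum big_ord_recr /= subnn derivZ derivXn.
rewrite mulr0n scaler0 addr0 scaler_sumr; apply: eq_bigr => k _.
have le_kn : (k <= n)%N by rewrite -ltnS.
rewrite derivZ derivXn subSn //= -scaler_nat !scalerA; congr (_ *: _).
rewrite mulrA -natrM mul_bin_down -subSn // natrM; ring.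
Qed.

Section Appell.

Variable R : numFieldType.

Lemma deriv_eq0_polyC (p : {poly R}) : p^`() = 0 -> p = (p.[0])%:P.
Proof.
move=> dp0; apply/polyP => -[|i]; first by rewrite coefC horner_coef0.
have /eqP := congr1 (fun q : {poly R} => q`_i) dp0.
by rewrite coefC coef_deriv coef0 mulrn_eq0 => /eqP.
Qed.

Lemma deriv_polyC_horner (p : {poly R}) a x :
  p^`() = a%:P -> p.[x] = a * x + p.[0].
Proof.
move=> dp; have := @deriv_eq0_polyC (p - a *: 'X).
rewrite derivB derivZ derivX dp alg_polyC subrr.
move=> /(_ erefl)/(congr1 (horner^~ x)).
by rewrite !hornerE subr0 => /(canRL (subrK _)); rewrite addrC.
Qed.

Lemma appell_eq (P Q : nat -> {poly R}) :
  P 0%N = Q 0%N ->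
  (forall n, (P n.+1)^`() = n.+1%:R *: P n) ->
  (forall n, (Q n.+1)^`() = n.+1%:R *: Q n) ->
  (forall n, (1 < n)%N -> (P n).[1] = (P n).[0]) ->
  (forall n, (1 < n)%N -> (Q n).[1] = (Q n).[0]) ->
  P =1 Q.
Proof.
move=> PQ0 dP dQ P1 Q1; elim=> // n IH.
have [c dE] : exists c, P n.+1 - Q n.+1 = c%:P.
  by eexists; apply: deriv_eq0_polyC; rewrite derivB dP dQ IH subrr.
have d2 : (P n.+2 - Q n.+2)^`() = (n.+2%:R * c)%:P.
  by rewrite derivB dP dQ -scalerBr dE scale_polyC.
have := deriv_polyC_horner 1 d2; rewrite !(hornerD, hornerN) P1 // Q1 // mulr1.
move=> /esym/(canRL (addrK _)); rewrite subrr => /eqP.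
rewrite mulf_eq0 pnatr_eq0 /= => /eqP c0.
by apply/eqP; rewrite -subr_eq0 dE c0.
Qed.

End Appell.

Lemma bernoulli_poly_reflect n :
  bernoulli_poly n = (-1) ^+ n *: (bernoulli_poly n \Po (1 - 'X)).
Proof.
apply: (@appell_eq _ bernoulli_poly (fun n => (-1) ^+ n *: _)) => {n}.
- rewrite /bernoulli_poly big_ord1 expr0 scale1r /bernoulli /=.
  by rewrite mul1r scale1r comp_polyC.
- exact: deriv_bernoulli_poly.
- move=> n; rewrite derivZ deriv_comp deriv_bernoulli_poly derivB derivC derivX.
  rewrite sub0r comp_polyZ mulrN1 scalerN -scaleNr !scalerA exprS.
  by congr (_ *: _); ring.
- exact: bernoulli_poly_at1.
- move=> n n_gt1; rewrite !hornerZ !horner_comp !hornerE subrr.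
  by rewrite bernoulli_poly_at1.
Qed.

Lemma bernpoly_reflect n x : bernpoly n (1 - x) = (-1) ^+ n * bernpoly n x.
Proof.
rewrite -!horner_bernoulli_poly {1}bernoulli_poly_reflect hornerZ horner_comp.
by rewrite !hornerE opprB addrC subrK.
Qed.

Lemma bernoulli_odd n : (1 < n)%N -> odd n -> bernoulli n = 0.
Proof.
move=> n_gt1 odd_n; have := bernpoly_reflect n 1.
rewrite subrr -!horner_bernoulli_poly bernoulli_poly_at1 // bernoulli_poly_at0.
rewrite -signr_odd odd_n mulN1r => /eqP; rewrite -subr_eq0 opprK -mulr2n.
by rewrite mulrn_eq0 => /eqP.
Qed.

Lemma Btilde_reflect D n v : (0 < D)%N -> (v <= D)%N -> (1 < n)%N ->
  Btilde D n ((D - v)%:R / D%:R) = (-1) ^+ n * Btilde D n (v%:R / D%:R).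
Proof.
move=> D_gt0 le_vD n_gt1.
have -> : (D - v)%:R / D%:R = 1 - v%:R / D%:R :> rat.
  by rewrite natrB // mulrBl divff // pnatr_eq0 -lt0n.
rewrite /Btilde bernpoly_reflect -signr_odd.
by case: (boolP (odd n)) => [/(bernoulli_odd n_gt1) -> | _]; rewrite /=; ring.
Qed.

Lemma bentry_reflect D a m w : (0 < D)%N -> (w <= D)%N -> (1 < a + m)%N ->
  bentry D a (m, (D - w)%N) = (-1) ^+ (a + m) * bentry D a (m, w).
Proof.
by move=> D_gt0 le_wD am_gt1; rewrite /bentry /= Btilde_reflect // -mulrA.
Qed.

Lemma bentry_mid D a m w : (0 < D)%N -> (w + w = D)%N -> (1 < a + m)%N ->
  odd (a + m) -> bentry D a (m, w) = 0.
Proof.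
move=> D_gt0 wwD am_gt1 odd_am.
have := @bentry_reflect D a m w D_gt0 ltac:(lia) am_gt1.
have -> : (D - w = w)%N by lia.
rewrite -signr_odd odd_am mulN1r => /eqP.
by rewrite -subr_eq0 opprK -mulr2n mulrn_eq0 => /eqP.
Qed.

Section FoldMatrix.

Variables (T : eqType) (R : pzRingType) (x0 : T) (n N : nat) (s c : seq T).
Variables (fold : T -> T) (sgn : T -> R).
Hypotheses (size_s : size s = n) (uniq_s : uniq s).

Definition seq_coord (u : 'rV[R]_n) (x : T) : R :=
  \sum_(k < n) u 0 k * (nth x0 s k == x)%:R.

Lemma seq_coord_nth u (k : 'I_n) : seq_coord u (nth x0 s k) = u 0 k.
Proof.
rewrite /seq_coord (bigD1 k) //= eqxx mulr1 big1 ?addr0 // => l.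
by rewrite -(inj_eq val_inj) nth_uniq ?size_s // => /negbTE ->; rewrite mulr0.
Qed.

Lemma seq_coord_notin u x : x \notin s -> seq_coord u x = 0.
Proof.
move=> x_notin; rewrite /seq_coord big1 // => k _.
case: eqP => [xk | _]; last exact: mulr0.
by move: x_notin; rewrite -xk mem_nth // size_s.
Qed.

Definition fold_mx : 'M[R]_(n, N) :=
  \matrix_(k, j) ((nth x0 s k == fold (nth x0 c j))%:R * sgn (nth x0 c j)).

Lemma mul_fold_mx u j :
  (u *m fold_mx) 0 j = seq_coord u (fold (nth x0 c j)) * sgn (nth x0 c j).
Proof. by rewrite !mxE big_distrl; apply: eq_bigr => k _; rewrite mxE mulrA. Qed.

Lemma fold_mx_factor m (F : 'I_m -> T -> R) :
  (forall i (j : 'I_N), F i (nth x0 c j) =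
     if fold (nth x0 c j) \in s then F i (fold (nth x0 c j)) * sgn (nth x0 c j)
     else 0) ->
  \matrix_(i < m, j < N) F i (nth x0 c j) =
  \matrix_(i < m, k < n) F i (nth x0 s k) *m fold_mx.
Proof.
move=> F_fold; set A := \matrix_(i < m, k < n) _; apply/matrixP => i j.
have -> : (A *m fold_mx) i j = (row i A *m fold_mx) 0 j.
  by rewrite -row_mul [RHS]mxE.
rewrite mxE F_fold mul_fold_mx.
case: ifP => [y_in | /negbT/seq_coord_notin -> //]; last by rewrite mul0r.
have y_idx : (index (fold (nth x0 c j)) s < n)%N by rewrite -size_s index_mem.
rewrite -{2}(nth_index x0 y_in) -[index _ _]/(val (Ordinal y_idx)).
by rewrite seq_coord_nth !mxE /= nth_index.
Qed.

End FoldMatrix.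

Lemma det_col_mx_mul (R : comPzRingType) n1 n2 (A1 : 'M[R]_n1) (A2 : 'M[R]_n2)
    (S1 : 'M[R]_(n1, n1 + n2)) (S2 : 'M[R]_(n2, n1 + n2)) :
  \det (col_mx (A1 *m S1) (A2 *m S2)) = \det A1 * \det A2 * \det (col_mx S1 S2).
Proof.
rewrite -[A1 *m S1]addr0 -[A2 *m S2]add0r -(mul0mx _ S2) -(mul0mx _ S1).
by rewrite -mul_block_col det_mulmx det_ublock.
Qed.

Lemma matrix_col_split (R : Type) n1 n2 N (F : nat -> 'I_N -> R) :
  \matrix_(i < n1 + n2, j < N) F i j =
  col_mx (\matrix_(i < n1, j < N) F i j) (\matrix_(i < n2, j < N) F (n1 + i)%N j).
Proof.
apply/matrixP => i j; rewrite -[i]splitK.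
by case: (split i) => k; rewrite ?col_mxEu ?col_mxEd !mxE.
Qed.

Definition col_pairs (r : nat) (f : nat -> nat) : seq (nat * nat) :=
  flatten [seq [seq (m, v) | v <- iota 1 (f m)] | m <- iota 0 r].

Lemma mem_col_pairs r f x :
  (x \in col_pairs r f) = [&& (x.1 < r)%N, (0 < x.2)%N & (x.2 <= f x.1)%N].
Proof.
apply/allpairsPdep/idP => [[m [v [m_in v_in ->]]] | /and3P [x1 x2 x2f]] /=.
  by move: m_in v_in; rewrite !mem_iota; lia.
by exists x.1, x.2; rewrite !mem_iota -surjective_pairing; split => //; lia.
Qed.

Lemma uniq_col_pairs r f : uniq (col_pairs r f).
Proof.
apply: allpairs_uniq_dep => [|m _|[m1 v1] [m2 v2] _ _ /= [-> ->]] //;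
  exact: iota_uniq.
Qed.

Lemma size_col_pairs r f : size (col_pairs r f) = (\sum_(m < r) f m)%N.
Proof.
rewrite size_allpairs_dep sumnE big_map -(big_mkord xpredT f).
by rewrite /index_iota subn0; apply: eq_bigr => m _; rewrite size_iota.
Qed.

(* The columns [(m, v)] with [v + v <= D] kept for rows of parity [p]: the
   middle column [v + v = D] vanishes on these rows iff [p + m] is odd. *)
Definition half_width (D : nat) (p : bool) (m : nat) : nat :=
  if p then (if odd m then kcl D else kfl D)
  else (if odd m then kfl D else kcl D).

Lemma half_width_complement D p m :
  (half_width D p m + half_width D (~~ p) m)%N = (D - 1)%N.
Proof. by rewrite /half_width /kcl /kfl; case: p; case: (odd m) => /=; lia. Qed.

Lemma half_width_double D p m : (half_width D p m + half_width D p m <= D)%N.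
Proof. by rewrite /half_width /kcl /kfl; case: p; case: (odd m) => /=; lia. Qed.

Lemma leq_half_width D p m w : (w + w < D)%N -> (w <= half_width D p m)%N.
Proof. by rewrite /half_width /kcl /kfl; case: p; case: (odd m) => /=; lia. Qed.

Lemma half_width_mid D p m w : (w + w <= D)%N -> (half_width D p m < w)%N ->
  (w + w = D)%N /\ odd (p + m).
Proof.
rewrite oddD oddb /half_width /kcl /kfl.
by case: p; case: (odd m) => /=; split; lia.
Qed.

Lemma sum_half_width_odd r D : (\sum_(m < r) half_width D true m)%N = Nr r D.
Proof.
rewrite /Nr; elim: r => [|r IH]; first by rewrite big_ord0 muln0 div0n.
rewrite big_ord_recr /= IH /half_width /kcl /kfl.
by have := odd_double_half r; case: (odd r) => /=; lia.
Qed.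

Lemma sum_half_width_even r D :
  (\sum_(m < r) half_width D false m)%N = (r * (D - 1) - Nr r D)%N.
Proof.
rewrite -sum_half_width_odd.
have -> : (r * (D - 1))%N =
    (\sum_(m < r) (half_width D false m + half_width D true m))%N.
  under eq_bigr do rewrite (half_width_complement D false).
  by rewrite sum_nat_const card_ord.
by rewrite big_split /= addnK.
Qed.

Definition fold_col (D : nat) (x : nat * nat) : nat * nat :=
  (x.1, if (x.2 + x.2 <= D)%N then x.2 else (D - x.2)%N).

Definition fold_sign (D : nat) (p : bool) (x : nat * nat) : rat :=
  if (x.2 + x.2 <= D)%N then 1 else (-1) ^+ (p + x.1).

Lemma fold_sign_negb D p x : (D < x.2 + x.2)%N ->
  fold_sign D (~~ p) x = - fold_sign D p x.
Proof.
rewrite /fold_sign ltnNge => /negbTE ->.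
by case: p; rewrite /= ?exprS ?mulN1r ?opprK.
Qed.

Lemma bentry_fold r D p a x : (2 < D)%N -> (1 < a)%N -> odd a = p ->
  x \in cols_all r D ->
  bentry D a x = if fold_col D x \in col_pairs r (half_width D p)
                 then bentry D a (fold_col D x) * fold_sign D p x else 0.
Proof.
case: x => m v D_gt2 a_gt1 odd_a; rewrite mem_col_pairs mem_col_pairs /=.
rewrite /fold_col /fold_sign /= => /and3P [lt_mr v_gt0 le_vD1].
case: (leqP (v + v) D) => [v_half | v_large]; rewrite lt_mr /=.
  rewrite v_gt0 mulr1; case: ifP => // /negbT; rewrite -ltnNge => v_mid.
  have [v_eq] := half_width_mid v_half v_mid; rewrite oddD oddb => odd_pm.
  by apply: bentry_mid; rewrite ?oddD ?odd_a //; lia.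
have le_vD : (v <= D)%N by lia.
have -> : (0 < D - v <= half_width D p m)%N.
  by rewrite subn_gt0 leq_half_width; lia.
rewrite -{1}(subKn le_vD) bentry_reflect; try lia.
by rewrite mulrC -signr_odd oddD odd_a -[in RHS]signr_odd oddD oddb.
Qed.

Definition parity_fold_mx (r D : nat) (p : bool) (n N : nat) : 'M[rat]_(n, N) :=
  fold_mx (0%N, 0%N) n N (col_pairs r (half_width D p)) (cols_all r D)
    (fold_col D) (fold_sign D p).

Lemma bentry_mx_fold r D p m n N (rows : nat -> nat) : (2 < D)%N ->
  size (col_pairs r (half_width D p)) = n -> size (cols_all r D) = N ->
  (forall i : 'I_m, (1 < rows i)%N /\ odd (rows i) = p) ->
  \matrix_(i < m, j < N) bentry D (rows i) (nth (0%N, 0%N) (cols_all r D) j) =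
  \matrix_(i < m, k < n)
     bentry D (rows i) (nth (0%N, 0%N) (col_pairs r (half_width D p)) k)
  *m parity_fold_mx r D p n N.
Proof.
move=> D_gt2 size_s size_c rowsP.
apply: (fold_mx_factor size_s (uniq_col_pairs _ _)
  (F := fun i => bentry D (rows i))) => i j.
have [rows_gt1 odd_rows] := rowsP i.
by apply: bentry_fold => //; rewrite mem_nth // size_c.
Qed.

Lemma bdet_parity_split r D n1 n2 (rows : nat -> nat) : (2 < D)%N ->
  size (cols1 r D) = n1 -> size (cols2 r D) = n2 ->
  size (cols_all r D) = (n1 + n2)%N ->
  (forall i, (i < n1 + n2)%N -> (1 < rows i)%N) ->
  (forall i, (i < n1)%N -> odd (rows i)) ->
  (forall i, (i < n2)%N -> ~~ odd (rows (n1 + i)%N)) ->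
  bdet D (n1 + n2) rows (cols_all r D) =
  \det (col_mx (parity_fold_mx r D true n1 (n1 + n2))
               (parity_fold_mx r D false n2 (n1 + n2))) *
  bdet D n1 rows (cols1 r D) * bdet D n2 (fun i => rows (n1 + i)%N) (cols2 r D).
Proof.
move=> D_gt2 size1 size2 size_c rows_gt1 odd_top even_bot.
rewrite /bdet (matrix_col_split n1 n2
  (fun i j => bentry D (rows i) (nth (0%N, 0%N) (cols_all r D) j))).
rewrite (bentry_mx_fold (p := true) D_gt2 size1 size_c); last first.
  by move=> i; split; [apply: rows_gt1; rewrite ltn_addr | exact: odd_top].
rewrite (bentry_mx_fold (p := false) (rows := fun i => rows (n1 + i)%N) D_gt2
  size2 size_c); last first.
  move=> i; split; first by apply: rows_gt1; rewrite ltn_add2l.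
  exact/negbTE/even_bot.
by rewrite det_col_mx_mul mulrC mulrA.
Qed.

Lemma parity_fold_mx_ker r D p n n' N (u : 'rV[rat]_n) (u' : 'rV[rat]_n') :
  (2 < D)%N -> size (col_pairs r (half_width D p)) = n ->
  size (col_pairs r (half_width D (~~ p))) = n' -> size (cols_all r D) = N ->
  u *m parity_fold_mx r D p n N + u' *m parity_fold_mx r D (~~ p) n' N = 0 ->
  u = 0.
Proof.
move=> D_gt2 size_s size_s' size_c uS0.
set s := col_pairs r (half_width D p) in size_s *.
set s' := col_pairs r (half_width D (~~ p)) in size_s' *.
have coordE x : x \in cols_all r D ->
    seq_coord (0%N, 0%N) s u (fold_col D x) * fold_sign D p x +
    seq_coord (0%N, 0%N) s' u' (fold_col D x) * fold_sign D (~~ p) x = 0.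
  move=> x_in; have x_idx : (index x (cols_all r D) < N)%N.
    by rewrite -size_c index_mem.
  have := congr1 (fun M : 'rV_N => M 0 (Ordinal x_idx)) uS0.
  by rewrite [LHS]mxE [RHS]mxE !mul_fold_mx /= nth_index.
apply/rowP => k; rewrite mxE.
rewrite -(seq_coord_nth (0%N, 0%N) size_s (uniq_col_pairs _ _)).
have : nth (0%N, 0%N) s k \in s by rewrite mem_nth // size_s.
case: (nth _ s k) => m w; rewrite mem_col_pairs /= => /and3P [lt_mr w_gt0 le_w].
have w_half : (w + w <= D)%N by have := half_width_double D p m; lia.
have := coordE (m, w).
rewrite mem_col_pairs /= lt_mr w_gt0 /fold_col /fold_sign /=.
rewrite w_half !mulr1 => /(_ ltac:(lia)).
case: (boolP ((m, w) \in s')) => [w_in' | /(seq_coord_notin _ size_s') ->];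
  last by rewrite addr0.
have w_lt : (w + w < D)%N.
  move: w_in'; rewrite mem_col_pairs /= => /and3P [_ _ le_w'].
  by have := half_width_complement D p m; lia.
have wD : (D - w + (D - w) <= D)%N = false by apply/negbTE; rewrite -ltnNge; lia.
have := coordE (m, (D - w)%N).
rewrite mem_col_pairs /= lt_mr /= => /(_ ltac:(lia)).
rewrite fold_sign_negb /=; last by lia.
rewrite /fold_col /fold_sign /= wD subKn; last by lia.
by rewrite -signr_odd; case: odd; rewrite ?expr0 ?expr1 => E2 E1; lra.
Qed.

Lemma det_parity_fold_mx_neq0 r D n1 n2 : (2 < D)%N ->
  size (cols1 r D) = n1 -> size (cols2 r D) = n2 ->
  size (cols_all r D) = (n1 + n2)%N ->
  \det (col_mx (parity_fold_mx r D true n1 (n1 + n2))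
               (parity_fold_mx r D false n2 (n1 + n2))) != 0.
Proof.
move=> D_gt2 size1 size2 size_c; apply/det0P => -[v v_neq0].
rewrite -[v]hsubmxK mul_row_col => vS0.
have v1 := parity_fold_mx_ker (p := true) D_gt2 size1 size2 size_c vS0.
rewrite addrC in vS0.
have v2 := parity_fold_mx_ker (p := false) D_gt2 size2 size1 size_c vS0.
by move: v_neq0; rewrite -[v]hsubmxK v1 v2 row_mx0 eqxx.
Qed.

Lemma admissible_gt1 r D alpha : admissible r D alpha ->
  forall t, (0 < t <= r * (D - 1))%N -> (1 < alpha t)%N.
Proof.
case=> incr alpha1 _ _; elim=> [|t IH] // /andP [_ le_t].
case: t IH le_t => [// | t IH le_t].
by apply: leq_trans (IH _) (ltnW (incr _ _ _)); lia.
Qed.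

Theorem proposition3p4 (r D : nat) :
  (1 <= r)%N -> (3 <= D)%N ->
  exists C : rat, C != 0 /\
    (forall alpha : nat -> nat, admissible r D alpha ->
       Delta r D alpha = C * Delta' r D alpha * Delta'' r D alpha) /\
    (forall alpha : nat -> nat, admissible r D alpha ->
       Delta' r D alpha != 0 -> Delta'' r D alpha != 0 -> Delta r D alpha != 0).
Proof.
move=> _ D_gt2; set n1 := Nr r D; set n2 := (r * (D - 1) - n1)%N.
have size1 : size (cols1 r D) = n1 by rewrite size_col_pairs sum_half_width_odd.
have size2 : size (cols2 r D) = n2 by rewrite size_col_pairs sum_half_width_even.
have n12 : (r * (D - 1))%N = (n1 + n2)%N by rewrite subnKC // mulnC leq_div.
have size_c : size (cols_all r D) = (n1 + n2)%N.
  by rewrite size_col_pairs sum_nat_const card_ord.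
set C := \det (col_mx (parity_fold_mx r D true n1 (n1 + n2))
                      (parity_fold_mx r D false n2 (n1 + n2))).
have C_neq0 : C != 0 by apply: det_parity_fold_mx_neq0.
have factor alpha : admissible r D alpha ->
    Delta r D alpha = C * Delta' r D alpha * Delta'' r D alpha.
  move=> adm; have [_ _ odd_alpha even_alpha] := adm.
  rewrite /Delta n12; apply: bdet_parity_split => // i lt_i.
  - by apply: (admissible_gt1 adm); lia.
  - by apply: odd_alpha; lia.
  - by apply: even_alpha; lia.
exists C; split=> //; split=> // alpha adm Delta'_neq0 Delta''_neq0.
by rewrite factor // !mulf_neq0.
Qed.
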